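(* Let $n,k,\ell_{max}$ be positive integers, $F\subseteq\{1,\dots,n\}$ with $|F|=k$, $\varepsilon\in(0,1]$, $b$ a positive integer, and $\eta=\frac1{4k}$. Let $\sigma=\frac{4}{3\eta k}\,\ell_{max}\log_2 k+\frac{3}{\eta k\varepsilon}+\frac{b\log_2 k}{\log_2(16/15)}$. Let $x(t)\in\{0,1\}^n$ satisfy, for every $t\ge0$, $x_i(t)=1$ for $i\in F$ and $x_i(t)=0$ for $i\notin F$. Let $w_i(0)=\frac{1}{k^{\ell_{max}}}$ for all $i$, and for $t\ge1$ let $w(t)=w(t-1)+\eta\,z(t-1)\big(x(t-1)-z(t-1)w(t-1)\big)$ with $z(t-1)=w(t-1)\cdot x(t-1)$. Then for every $t\ge\sigma$: (1) for every $i\in F$, $w_i(t)\in\left[\frac{1}{(1+\varepsilon)\sqrt k},\frac1{\sqrt k}\right]$; (2) for every $i\notin F$, $w_i(t)\le\frac{1}{k^{\ell_{max}+b}}$.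
   Context: This describes a single neuron engaged in learning (Oja's rule) at every step, always receiving the same input vector in which exactly the coordinates in $F$ are $1$. In particular $\sigma=O\!\left(\frac1{\eta k}\left(\ell_{max}\log k+\frac1\varepsilon\right)+b\log k\right)$. *)

(* concrete reals R. Coordinates are indexed 1..n. *)
From Stdlib Require Import Reals List Arith.
Import ListNotations.
Open Scope R_scope.

Definition log2 (x : R) : R := ln x / ln 2.

Definition dot (n : nat) (w x : nat -> R) : R :=
  fold_right Rplus 0 (map (fun i => w i * x i) (seq 1 n)).

Fixpoint oja_w (n : nat) (eta : R) (w0 : nat -> R) (x : nat -> nat -> R)
  (t : nat) : nat -> R :=
  match t with
  | O => w0
  | S t' =>
      let w := oja_w n eta w0 x t' in
      let z := dot n w (x t') in
      fun i => w i + eta * z * (x t' i - z * w i)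
  end.

From Stdlib Require Import Reals List Arith Lra Lia ZArith.
Open Scope R_scope.

(* Since every input is the indicator of F, all weights in F share a
   common value u(t) and all the other weights a common value v(t).  With
   eta = 1/(4k), the rescaled weight s = sqrt k * u obeys s' = s + s (1 - s^2)/4
   and v' = v (1 - s^2/4).  Starting from s(0) = sqrt k / k^lmax, s grows by a
   factor 19/16 per step until it exceeds 1/2, which happens within
   (16/3) lmax log2 k steps.  From then on 1 - s^2 contracts by 7/8 per step, so
   s >= 1/(1+eps) after 12/eps further steps, while v contracts by 15/16 per step
   and thus loses the extra factor k^b within b log2 k / log2(16/15) steps. *)

Lemma sum_map_if (P : nat -> bool) (u : R) (l : list nat) :
  fold_right Rplus 0 (map (fun i => if P i then u else 0) l) =
  INR (length (filter P l)) * u.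
Proof.
  induction l as [|a l IH]; simpl; [lra|].
  destruct (P a); simpl length; rewrite ?S_INR, IH; lra.
Qed.

Lemma length_filter_In_seq (n : nat) (F : list nat) :
  NoDup F -> (forall i, In i F -> (1 <= i <= n)%nat) ->
  length (filter (fun i => if in_dec Nat.eq_dec i F then true else false) (seq 1 n))
  = length F.
Proof.
  intros HN HF. apply Nat.le_antisymm; apply NoDup_incl_length.
  - apply NoDup_filter, seq_NoDup.
  - intros i Hi. apply filter_In in Hi as [_ Hi].
    destruct (in_dec Nat.eq_dec i F); congruence.
  - exact HN.
  - intros i Hi. apply filter_In. split.
    + apply in_seq. specialize (HF i Hi). lia.
    + destruct (in_dec Nat.eq_dec i F); tauto.
Qed.

Lemma dot_indicator (n : nat) (F : list nat) (w y : nat -> R) (u : R) :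
  NoDup F -> (forall i, In i F -> (1 <= i <= n)%nat) ->
  (forall i, (1 <= i <= n)%nat -> (In i F -> y i = 1) /\ (~ In i F -> y i = 0)) ->
  (forall i, In i F -> w i = u) ->
  dot n w y = INR (length F) * u.
Proof.
  intros HN HF Hy Hw. unfold dot.
  rewrite (map_ext_in _
    (fun i => if (if in_dec Nat.eq_dec i F then true else false) then u else 0)).
  - rewrite sum_map_if, length_filter_In_seq by assumption. reflexivity.
  - intros i Hi. apply in_seq in Hi. destruct (Hy i ltac:(lia)) as [Hin Hout].
    destruct (in_dec Nat.eq_dec i F) as [HiF|HiF].
    + rewrite Hin, Hw by assumption. ring.
    + rewrite Hout by assumption. ring.
Qed.

Fixpoint oja_in (s0 : R) (t : nat) : R :=
  match t with
  | O => s0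
  | S t => let s := oja_in s0 t in s + s * (1 - s * s) / 4
  end.

Fixpoint oja_out (s0 v0 : R) (t : nat) : R :=
  match t with
  | O => v0
  | S t => oja_out s0 v0 t * (1 - oja_in s0 t * oja_in s0 t / 4)
  end.

Lemma oja_w_indicator (n : nat) (F : list nat) (x : nat -> nat -> R) (c : R) (t : nat) :
  NoDup F -> (forall i, In i F -> (1 <= i <= n)%nat) -> (0 < length F)%nat ->
  (forall t i, (1 <= i <= n)%nat -> (In i F -> x t i = 1) /\ (~ In i F -> x t i = 0)) ->
  let K := INR (length F) in
  let w := oja_w n (1 / (4 * K)) (fun _ => c) x t in
  (forall i, In i F -> w i = oja_in (sqrt K * c) t / sqrt K) /\
  (forall i, (1 <= i <= n)%nat -> ~ In i F -> w i = oja_out (sqrt K * c) c t).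
Proof.
  intros HN HF HF0 Hx K w. subst w.
  assert (HK : 0 < K) by (apply lt_0_INR; assumption).
  assert (Hsq : 0 < sqrt K) by (apply sqrt_lt_R0; assumption).
  assert (Hsqsq : sqrt K * sqrt K = K) by (apply sqrt_sqrt; lra).
  (* Hide K under the square root, so that rewriting K into sqrt K * sqrt K below
     only touches its outer occurrences. *)
  set (r := sqrt K) in *.
  induction t as [|t [IHin IHout]]; simpl.
  - split; intros; [field; lra | reflexivity].
  - rewrite (dot_indicator n F _ (x t) _ HN HF (Hx t) IHin). fold K.
    split.
    + intros i Hi. destruct (Hx t i (HF i Hi)) as [Hin _].
      rewrite Hin, IHin, <- Hsqsq by assumption. field. lra.
    + intros i Hi HiF. destruct (Hx t i Hi) as [_ Hout].
      rewrite Hout, IHout, <- Hsqsq by assumption. field. lra.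
Qed.

Section NormalizedDynamics.

Variables s0 v0 : R.
Hypothesis s0_range : 0 < s0 <= 1.
Hypothesis v0_nonneg : 0 <= v0.

Local Notation s := (oja_in s0).
Local Notation v := (oja_out s0 v0).

Lemma oja_in_range t : 0 < s t <= 1.
Proof.
  induction t as [|t [Hpos Hle1]]; simpl; [assumption|].
  split; [nra|].
  assert (0 <= (1 - s t) * (4 - s t - s t * s t)) by (apply Rmult_le_pos; nra).
  nra.
Qed.

Lemma oja_in_le_succ t : s t <= s (S t).
Proof. simpl. destruct (oja_in_range t). nra. Qed.

Lemma oja_in_le_add m j : s m <= s (m + j).
Proof.
  induction j as [|j IH]; rewrite ?Nat.add_0_r; [lra|].
  rewrite Nat.add_succ_r. pose proof (oja_in_le_succ (m + j)). lra.
Qed.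

Lemma oja_in_ge_half m : 1 / 2 <= s0 * (19 / 16) ^ m -> 1 / 2 <= s m.
Proof.
  (* Below 1/2 the factor 1 + (1 - s^2)/4 is at least 19/16. *)
  assert (Hgrow : forall t, 1 / 2 <= s t \/ s0 * (19 / 16) ^ t <= s t).
  { induction t as [|t [IH|IH]]; [right; simpl; lra| |].
    - left. pose proof (oja_in_le_succ t). lra.
    - destruct (Rle_or_lt (1 / 2) (s t)) as [Hhalf|Hhalf].
      + left. pose proof (oja_in_le_succ t). lra.
      + right. simpl. destruct (oja_in_range t). nra. }
  intros Hm. destruct (Hgrow m); lra.
Qed.

Lemma oja_in_sq_contract m j : 1 / 2 <= s m ->
  1 - s (m + j) * s (m + j) <= (7 / 8) ^ j * (1 - s m * s m).
Proof.
  intros Hm. induction j as [|j IH]; rewrite ?Nat.add_0_r; simpl; [lra|].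
  rewrite Nat.add_succ_r. simpl.
  pose proof (oja_in_le_add m j). destruct (oja_in_range (m + j)).
  set (a := s (m + j)) in *.
  assert (Hstep : 1 - (a + a * (1 - a * a) / 4) * (a + a * (1 - a * a) / 4)
                  <= 7 / 8 * (1 - a * a)).
  { assert (1 / 4 <= a * a <= 1) by (split; nra).
    assert ((a * a - 1 / 4) * (a * a - 1) <= 0) by nra.
    assert ((1 - a * a) * (a * a * a * a - 9 * (a * a) + 2) <= 0) by nra.
    nra. }
  nra.
Qed.

Lemma oja_in_ge_inv m j eps : 0 < eps -> 1 / 2 <= s m -> 7 / eps <= INR j ->
  1 / (1 + eps) <= s (m + j).
Proof.
  intros Heps Hm Hj.
  pose proof (oja_in_sq_contract m j Hm) as Hsq.
  destruct (oja_in_range m). destruct (oja_in_range (m + j)).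
  set (a := s (m + j)) in *. set (p := (7 / 8) ^ j) in *.
  assert (Hp0 : 0 <= p) by (apply pow_le; lra).
  assert (Hpq : p * (8 / 7) ^ j = 1).
  { unfold p. rewrite <- Rpow_mult_distr. replace (7 / 8 * (8 / 7)) with 1 by field.
    apply pow1. }
  assert (Hbern : 1 + INR j * (1 / 7) <= (8 / 7) ^ j).
  { replace (8 / 7) with (1 + 1 / 7) by field. apply poly. lra. }
  assert (Hje : 7 <= INR j * eps).
  { apply (Rmult_le_compat_r eps) in Hj; [|lra].
    unfold Rdiv in Hj. rewrite Rmult_assoc, Rinv_l in Hj by lra. lra. }
  assert (Hq : 1 + eps <= (8 / 7) ^ j * eps) by nra.
  assert (Hpe : p * (1 + eps) <= eps).
  { apply (Rmult_le_compat_l p) in Hq; [|assumption].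
    rewrite <- Rmult_assoc, Hpq in Hq. lra. }
  assert (Ha : 1 - a * a <= p) by nra.
  assert (Ha2 : 1 <= a * a * (1 + eps)) by nra.
  apply (Rmult_le_reg_r (1 + eps)); [lra|].
  unfold Rdiv. rewrite Rmult_1_l, Rinv_l by lra.
  assert (a * a * (1 + eps) <= a * (1 + eps)) by (apply Rmult_le_compat_r; nra).
  lra.
Qed.

Lemma oja_out_range t : 0 <= v t <= v0.
Proof.
  induction t as [|t IH]; simpl; [lra|].
  destruct (oja_in_range t). assert (0 <= s t * s t <= 1) by (split; nra). nra.
Qed.

Lemma oja_out_contract m j : 1 / 2 <= s m -> v (m + j) <= (15 / 16) ^ j * v m.
Proof.
  intros Hm. induction j as [|j IH]; rewrite ?Nat.add_0_r; simpl; [lra|].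
  rewrite Nat.add_succ_r. simpl.
  pose proof (oja_in_le_add m j). destruct (oja_in_range (m + j)).
  destruct (oja_out_range (m + j)).
  assert (1 / 4 <= s (m + j) * s (m + j)) by nra.
  assert (v (m + j) * (1 - s (m + j) * s (m + j) / 4) <= 15 / 16 * v (m + j)) by nra.
  lra.
Qed.

Lemma oja_out_decay m j : 1 / 2 <= s m -> v (m + j) * (16 / 15) ^ j <= v0.
Proof.
  intros Hm. pose proof (oja_out_contract m j Hm). destruct (oja_out_range m).
  assert (Hpq : (15 / 16) ^ j * (16 / 15) ^ j = 1).
  { rewrite <- Rpow_mult_distr. replace (15 / 16 * (16 / 15)) with 1 by field.
    apply pow1. }
  assert (0 <= (16 / 15) ^ j) by (apply pow_le; lra).
  nra.
Qed.

End NormalizedDynamics.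

Lemma ln_le_inv (x y : R) : 0 < x -> 0 < y -> ln x <= ln y -> x <= y.
Proof.
  intros Hx Hy Hle. destruct (Rle_or_lt x y) as [|Hlt]; [assumption|].
  pose proof (ln_increasing y x Hy Hlt). lra.
Qed.

Lemma ln_pos (x : R) : 1 < x -> 0 < ln x.
Proof. intros Hx. rewrite <- ln_1. apply ln_increasing; lra. Qed.

Lemma log2_nonneg (x : R) : 1 <= x -> 0 <= log2 x.
Proof.
  intros Hx. unfold log2. pose proof (ln_pos 2 ltac:(lra)).
  destruct (Req_dec x 1) as [->|Hne].
  - rewrite ln_1. lra.
  - pose proof (ln_pos x ltac:(lra)). apply Rlt_le, Rdiv_lt_0_compat; lra.
Qed.

Lemma pow_le_pow_of_log2 (a q : R) (e m : nat) :
  0 < a -> 1 < q -> INR e * log2 a / log2 q <= INR m -> a ^ e <= q ^ m.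
Proof.
  intros Ha Hq Hem. unfold log2 in Hem.
  pose proof (ln_pos 2 ltac:(lra)) as H2. pose proof (ln_pos q Hq) as Hlq.
  apply ln_le_inv; try (apply pow_lt; lra).
  rewrite !ln_pow by lra.
  replace (INR e * (ln a / ln 2) / (ln q / ln 2)) with (INR e * ln a / ln q) in Hem
    by (field; lra).
  apply (Rmult_le_compat_r (ln q)) in Hem; [|lra].
  unfold Rdiv in Hem. rewrite Rmult_assoc, Rinv_l in Hem by lra. lra.
Qed.

Lemma log2_19_16_ge : 3 / 16 <= log2 (19 / 16).
Proof.
  unfold log2. pose proof (ln_pos 2 ltac:(lra)).
  assert (H8 : ln (2 ^ 3) <= ln ((19 / 16) ^ 16)).
  { left. apply ln_increasing; [lra | simpl; lra]. }
  rewrite !ln_pow in H8 by lra. simpl INR in H8.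
  apply (Rmult_le_reg_r (ln 2)); [lra|]. unfold Rdiv at 2.
  rewrite Rmult_assoc, Rinv_l by lra. lra.
Qed.

Lemma pow_le_pow_19_16 (a : R) (e m : nat) :
  1 <= a -> 16 / 3 * INR e * log2 a <= INR m -> a ^ e <= (19 / 16) ^ m.
Proof.
  intros Ha Hm. apply pow_le_pow_of_log2; [lra | lra |].
  pose proof log2_19_16_ge as Hg. pose proof (log2_nonneg a Ha).
  assert (0 <= INR e * log2 a) by (apply Rmult_le_pos; [apply pos_INR | assumption]).
  set (X := INR e * log2 a / log2 (19 / 16)).
  assert (HX : X * log2 (19 / 16) = INR e * log2 a) by (unfold X; field; lra).
  assert (0 <= X)
    by (unfold X; apply Rmult_le_pos; [assumption | apply Rlt_le, Rinv_0_lt_compat; lra]).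
  nra.
Qed.

Lemma sigma_split (A eps C : R) (t : nat) :
  0 <= A -> 0 <= C -> 0 < eps <= 1 -> A + 12 / eps + C <= INR t ->
  exists m j, t = (m + j)%nat /\ A <= INR m /\ 7 / eps <= INR j /\ C <= INR j.
Proof.
  intros HA HC Heps Ht. destruct (archimed A) as [Hup1 Hup2].
  assert (H12 : 12 <= 12 / eps).
  { apply (Rmult_le_reg_r eps); [lra|]. field_simplify; lra. }
  set (m := Z.to_nat (up A)).
  assert (Hm : INR m = IZR (up A)).
  { unfold m. rewrite INR_IZR_INZ, Z2Nat.id; [reflexivity|]. apply le_IZR. lra. }
  assert (Hmt : (m <= t)%nat) by (apply INR_le; lra).
  exists m, (t - m)%nat. rewrite minus_INR by assumption.
  repeat split; [lia | lra | lra | lra].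
Qed.

Lemma oja_in_escape (K : R) (lmax m : nat) :
  1 <= K -> (0 < lmax)%nat -> 16 / 3 * INR lmax * log2 K <= INR m ->
  let s0 := sqrt K * (1 / K ^ lmax) in 0 < s0 <= 1 /\ 1 / 2 <= oja_in s0 m.
Proof.
  intros HK Hl Hm s0.
  assert (HKl : K <= K ^ lmax) by (rewrite <- (pow_1 K) at 1; apply Rle_pow; [lra | lia]).
  assert (Hsq1 : 1 <= sqrt K) by (rewrite <- sqrt_1; apply sqrt_le_1_alt; lra).
  assert (HsqK : sqrt K * sqrt K = K) by (apply sqrt_sqrt; lra).
  assert (Hs0 : 0 < s0 <= 1).
  { unfold s0. split; [apply Rmult_lt_0_compat; [lra | apply Rdiv_lt_0_compat; lra]|].
    apply (Rmult_le_reg_r (K ^ lmax)); [lra|]. field_simplify; [nra | lra]. }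
  split; [assumption|]. apply (oja_in_ge_half s0 Hs0).
  pose proof (pow_le_pow_19_16 K lmax m HK Hm).
  unfold s0. apply (Rmult_le_reg_r (K ^ lmax)); [lra|]. field_simplify; nra.
Qed.

Lemma oja_out_le_pow (K s0 : R) (lmax b m j : nat) :
  1 <= K -> 0 < s0 <= 1 -> 1 / 2 <= oja_in s0 m ->
  INR b * log2 K / log2 (16 / 15) <= INR j ->
  oja_out s0 (1 / K ^ lmax) (m + j) <= 1 / K ^ (lmax + b).
Proof.
  intros HK Hs0 Hhalf Hj.
  assert (HKl : 0 < K ^ lmax) by (apply pow_lt; lra).
  assert (HKb : 0 < K ^ b) by (apply pow_lt; lra).
  assert (Hv0 : 0 <= 1 / K ^ lmax) by (apply Rlt_le, Rdiv_lt_0_compat; lra).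
  pose proof (oja_out_decay s0 (1 / K ^ lmax) Hs0 Hv0 m j Hhalf) as Hdecay.
  pose proof (oja_out_range s0 (1 / K ^ lmax) Hs0 Hv0 (m + j)).
  assert (Hb : K ^ b <= (16 / 15) ^ j) by (apply pow_le_pow_of_log2; lra).
  set (v := oja_out s0 (1 / K ^ lmax) (m + j)) in *.
  assert (HvKb : v * K ^ b <= 1 / K ^ lmax) by nra.
  rewrite pow_add. apply (Rmult_le_reg_r (K ^ lmax * K ^ b)); [nra|].
  replace (1 / (K ^ lmax * K ^ b) * (K ^ lmax * K ^ b)) with 1 by (field; lra).
  apply (Rmult_le_compat_r (K ^ lmax)) in HvKb; [|lra].
  replace (1 / K ^ lmax * K ^ lmax) with 1 in HvKb by (field; lra).
  lra.
Qed.

Theorem mainTheorem10 :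
  forall (n k lmax b : nat) (F : list nat) (eps : R) (x : nat -> nat -> R),
    (0 < n)%nat -> (0 < k)%nat -> (0 < lmax)%nat -> (0 < b)%nat ->
    NoDup F -> (forall i, In i F -> (1 <= i <= n)%nat) -> length F = k ->
    0 < eps <= 1 ->
    (forall t i, (1 <= i <= n)%nat ->
        (In i F -> x t i = 1) /\ (~ In i F -> x t i = 0)) ->
    let eta := 1 / (4 * INR k) in
    let sigma := 4 / (3 * eta * INR k) * INR lmax * log2 (INR k)
                 + 3 / (eta * INR k * eps)
                 + INR b * log2 (INR k) / log2 (16 / 15) in
    let w := oja_w n eta (fun _ => 1 / INR k ^ lmax) x in
    forall t : nat, sigma <= INR t ->
      (forall i, In i F ->
         1 / ((1 + eps) * sqrt (INR k)) <= w t i <= 1 / sqrt (INR k)) /\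
      (forall i, (1 <= i <= n)%nat -> ~ In i F ->
         w t i <= 1 / INR k ^ (lmax + b)).
Proof.
  intros n k lmax b F eps x _ Hk Hl _ HN HF HL Heps Hx eta sigma w t Ht.
  subst k w eta. set (K := INR (length F)) in *.
  assert (HK : 1 <= K) by (apply (le_INR 1); lia).
  destruct (oja_w_indicator n F x (1 / K ^ lmax) t HN HF Hk Hx) as [Win Wout].
  fold K in Win, Wout.
  assert (Hlog : 0 < log2 (16 / 15)) by (apply Rdiv_lt_0_compat; apply ln_pos; lra).
  pose proof (log2_nonneg K HK).
  destruct (sigma_split (16 / 3 * INR lmax * log2 K) eps
              (INR b * log2 K / log2 (16 / 15)) t) as (m & j & -> & Hm & Hj7 & HjC).
  - pose proof (pos_INR lmax). apply Rmult_le_pos; nra.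
  - apply Rmult_le_pos; [apply Rmult_le_pos; [apply pos_INR | assumption]|].
    apply Rlt_le, Rinv_0_lt_compat. assumption.
  - assumption.
  - replace (_ + _ + _) with sigma by (unfold sigma; field; repeat split; lra). assumption.
  - destruct (oja_in_escape K lmax m HK Hl Hm) as [Hs0 Hhalf].
    split.
    + intros i Hi. rewrite Win by assumption.
      pose proof (oja_in_range _ Hs0 (m + j)).
      pose proof (oja_in_ge_inv _ Hs0 m j eps ltac:(lra) Hhalf Hj7).
      replace (1 / ((1 + eps) * sqrt K)) with (1 / (1 + eps) / sqrt K)
        by (field; split; [apply Rgt_not_eq, sqrt_lt_R0 |]; lra).
      assert (0 <= / sqrt K) by (apply Rlt_le, Rinv_0_lt_compat, sqrt_lt_R0; lra).
      split; apply Rmult_le_compat_r; lra.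
    + intros i Hi HiF. rewrite Wout by assumption.
      exact (oja_out_le_pow K _ lmax b m j HK Hs0 Hhalf HjC).
Qed.
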